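(* The atom squaring function $\mathbb A^*\to\mathbb A^*$, which maps $a_1\cdots a_n$ to the concatenation of all two-letter words $a_ia_j$ for $i,j\in\{1,\ldots,n\}$ taken in lexicographic order of $(i,j)$ (i.e. $a_1a_1\,a_1a_2\cdots a_1a_n\,a_2a_1\cdots a_na_n$), is not computed by any pebble transducer with atoms that has at most two pebbles.
   Context: $\mathbb A$ is an infinite set of atoms. A pebble transducer with atoms, with input alphabet $\Sigma+\mathbb A$ and output alphabet $\Gamma+\mathbb A$ ($\Sigma,\Gamma$ finite), is given by a finite set of states $q$, each with a stack height $\dim(q)\in\{0,1,\ldots\}$, MSO universe formulas $\varphi_q(x_1,\ldots,x_{\dim(q)})$, and MSO formulas defining a linear order on configurations; all formulas are over the vocabulary $\{\le\}\cup\{a(x):a\in\Sigma\}$ of the input string (positions carrying atoms satisfy no label predicate). A configuration on input $w$ is a pair $(q,\bar a)$ with $\bar a$ a tuple of positions of length $\dim(q)$ satisfying $\varphi_q$ (the pebble stack; its last entry is the head). Stack discipline: for any two consecutive configurations in the order, one stack is a prefix of the other, or both have equal length and agree except on the last entry. Each state has an output which is a letter of $\Gamma$ or the symbol “atom under the head”, which outputs the atom at the head position if it carries an atom and the empty string otherwise. The output on $w$ is the concatenation of outputs of all configurations in the defined order. The number of pebbles is the maximal stack height. *)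

From mathcomp Require Import all_boot.
From Stdlib Require List.

Set Implicit Arguments.
Unset Strict Implicit.
Unset Printing Implicit Defensive.

(* Variables are de Bruijn indices: first-order variable i refers to   *)
(* the i-th entry of the first-order environment, second-order          *)
(* variable X to the X-th entry of the second-order environment.        *)
(* An atomic formula mentioning an unbound variable is false.           *)
Inductive mso (Sigma : Type) : Type :=
| MLe   : nat -> nat -> mso Sigma
| MLab  : Sigma -> nat -> mso Sigma
| MIn   : nat -> nat -> mso Sigma
| MNot  : mso Sigma -> mso Sigma
| MAnd  : mso Sigma -> mso Sigma -> mso Sigma
| MExFO : mso Sigma -> mso Sigma
| MExSO : mso Sigma -> mso Sigma.

Fixpoint msat (Sigma A : Type) (w : seq (Sigma + A))
    (fo : seq nat) (so : seq (nat -> bool)) (phi : mso Sigma) : Prop :=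
  match phi with
  | MLe i j =>
      match List.nth_error fo i, List.nth_error fo j with
      | Some p, Some q => (p <= q)%N
      | _, _ => False
      end
  | MLab a i =>
      match List.nth_error fo i with
      | Some p => List.nth_error w p = Some (inl a)
      | None => False
      end
  | MIn i k =>
      match List.nth_error fo i, List.nth_error so k with
      | Some p, Some X => X p = true
      | _, _ => False
      end
  | MNot psi => ~ msat w fo so psi
  | MAnd psi chi => msat w fo so psi /\ msat w fo so chi
  | MExFO psi => exists p, (p < size w)%N /\ msat w (p :: fo) so psi
  | MExSO psi => exists X : nat -> bool, msat w fo (X :: so) psi
  end.

(*  - ptdim q     : stack height of state q                             *)
(*  - ptuniv q    : universe formula phi_q(x_1..x_dim q)                *)
(*                  (free FO variables 0..dim q - 1 = the stack)         *)
(*  - ptord q q'  : formula psi_{q,q'}(x_1..x_dim q, y_1..y_dim q')     *)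
(*                  defining (q,xs) <= (q',ys); env = xs ++ ys           *)
(*  - ptout q     : Some g = output letter g; None = "atom under head"  *)
Record pebble_transducer (Sigma Gamma Q : finType) := PebbleTransducer {
  ptdim  : Q -> nat;
  ptuniv : Q -> mso Sigma;
  ptord  : Q -> Q -> mso Sigma;
  ptout  : Q -> option Gamma
}.

Section Semantics.
Variables (Sigma Gamma Q : finType) (A : Type).
Variable T : pebble_transducer Sigma Gamma Q.

Definition config := (Q * seq nat)%type.

Definition is_config (w : seq (Sigma + A)) (c : config) : Prop :=
  size c.2 = ptdim T c.1 /\ all (fun p => p < size w)%N c.2 /\
  msat w c.2 [::] (ptuniv T c.1).

Definition cle (w : seq (Sigma + A)) (c c' : config) : Prop :=
  msat w (c.2 ++ c'.2) [::] (ptord T c.1 c'.1).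

Definition stack_ok (u v : seq nat) : bool :=
  prefix u v || prefix v u ||
  ((size u == size v) && (take (size u).-1 u == take (size v).-1 v)).

Definition consecutive (w : seq (Sigma + A)) (c c' : config) : Prop :=
  is_config w c /\ is_config w c' /\ c <> c' /\ cle w c c' /\
  ~ (exists d, is_config w d /\ d <> c /\ d <> c' /\ cle w c d /\ cle w d c').

Definition valid_on (w : seq (Sigma + A)) : Prop :=
  (forall c, is_config w c -> cle w c c) /\
  (forall c c', is_config w c -> is_config w c' ->
      cle w c c' -> cle w c' c -> c = c') /\
  (forall c d e, is_config w c -> is_config w d -> is_config w e ->
      cle w c d -> cle w d e -> cle w c e) /\
  (forall c c', is_config w c -> is_config w c' -> cle w c c' \/ cle w c' c) /\
  (forall c c', consecutive w c c' -> stack_ok c.2 c'.2).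

Definition valid : Prop := forall w : seq (Sigma + A), valid_on w.

Definition conf_out (w : seq (Sigma + A)) (c : config) : seq (Gamma + A) :=
  match ptout T c.1 with
  | Some g => [:: inl g]
  | None =>
      match c.2 with
      | [::] => [::]
      | p0 :: _ =>
          match List.nth_error w (last p0 c.2) with
          | Some (inr a) => [:: inr a]
          | _ => [::]
          end
      end
  end.

Definition produces (w : seq (Sigma + A)) (o : seq (Gamma + A)) : Prop :=
  exists s : seq config,
    uniq s /\ (forall c, c \in s <-> is_config w c) /\
    (forall i j ci cj, (i < j)%N -> List.nth_error s i = Some ci ->
        List.nth_error s j = Some cj -> cle w ci cj) /\
    o = flatten (map (conf_out w) s).

Definition num_pebbles_le (k : nat) : Prop := forall q : Q, (ptdim T q <= k)%N.

Definition computes (f : seq A -> seq A) : Prop :=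
  forall w : seq A, produces (map inr w) (map inr (f w)).

End Semantics.

Definition atom_square (A : Type) (w : seq A) : seq A :=
  flatten [seq [:: a; b] | a <- w, b <- w].

From mathcomp Require Import all_boot zify.
Set Implicit Arguments. Unset Strict Implicit. Unset Printing Implicit Defensive.

(* Run the transducer on n distinct atoms and call a window a position of the output
   carrying an atom that recurs at the next B even offsets, B = #|Q|. The square
   a_1a_1 a_1a_2 ... a_na_n has n(n - B) windows. With two pebbles, the stack
   discipline forces consecutive two-pebble configurations to share their first
   pebble; inside such a run a configuration printing atom y has its head on y, so
   it is determined by its state, and no window fits in the run. Hence every window
   lies within 2B letters of the output of a configuration with at most one pebble;
   there are at most B(n + 1) of those, each accounting for at most 4B + 1 windows,
   which is linear in n. *)

Section Windows.
Variables (Gamma X : eqType) (m : nat).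

Definition rep_head (s : seq (Gamma + X)) : bool :=
  if s is inr y :: _ then
    (2 * m < size s) && all (fun t => nth (inr y) s (2 * t) == inr y) (iota 0 m.+1)
  else false.
#[global] Arguments rep_head : simpl never.

Fixpoint windows (s : seq (Gamma + X)) : nat :=
  if s is _ :: s' then rep_head s + windows s' else 0.

Lemma rep_headP s :
  rep_head s -> 2 * m < size s /\ exists y, forall t, t <= m -> nth (inr y) s (2 * t) = inr y.
Proof.
case: s => [|[x|y] s] //; rewrite /rep_head => /andP [Hs /allP Hrep]; split=> //.
by exists y => t Ht; apply/eqP/Hrep; rewrite mem_iota.
Qed.

Lemma rep_head_cat s v : 2 * m < size s -> rep_head (s ++ v) = rep_head s.
Proof.
case: s => [|[x|y] s] // Hs; rewrite /rep_head size_cat Hs (leq_trans Hs) ?leq_addr //.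
apply: eq_in_all => t; rewrite mem_iota => /andP [_ Ht].
by rewrite nth_cat ifT //; lia.
Qed.

Lemma windows_cat_ge u v : windows u + windows v <= windows (u ++ v).
Proof.
elim: u => //= x u IH; rewrite -addnA leq_add //.
by case Hx: (rep_head _) => //; rewrite -cat_cons rep_head_cat ?Hx ?(rep_headP Hx).1.
Qed.

Lemma windows_cat_le u v : windows (u ++ v) <= windows u + windows v + minn (size u) (2 * m).
Proof.
elim: u => [|x u IH] /=; first by rewrite min0n addn0.
case: (leqP (size u).+1 (2 * m)) => Hu.
- by case: (rep_head _); lia.
- rewrite -cat_cons rep_head_cat //; lia.
Qed.

Lemma windows_size s : windows s <= size s.
Proof. by elim: s => //= x s IH; case: (rep_head _); lia. Qed.

Lemma windows_insert_le u x v :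
  windows (u ++ x ++ v) <= windows u + windows v + size x + 4 * m.
Proof.
have := windows_cat_le u (x ++ v); have := windows_cat_le x v.
have := windows_size x; lia.
Qed.


End Windows.

Section PairWord.
Variable T : Type.

Definition pairs_with (a : T) (v : seq T) : seq T := flatten [seq [:: a; b] | b <- v].
Definition pairword (u v : seq T) : seq T := flatten [seq [:: a; b] | a <- u, b <- v].

Lemma pairword_cons a u v : pairword (a :: u) v = pairs_with a v ++ pairword u v.
Proof. by rewrite /pairword allpairs_cons flatten_cat. Qed.

Lemma size_pairs_with a v : size (pairs_with a v) = 2 * size v.
Proof. by elim: v => //= b v IH; rewrite IH mulnS. Qed.

Lemma nth_pairs_with d a v j : j < size v -> nth d (pairs_with a v) (2 * j) = a.
Proof. by elim: v j => [|b v IH] [|j] // Hj; rewrite mulnS; apply: IH. Qed.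

End PairWord.

Lemma map_pairword (T U : Type) (g : T -> U) u v :
  map g (pairword u v) = pairword (map g u) (map g v).
Proof.
elim: u => //= a u IH; rewrite !pairword_cons map_cat IH; congr (_ ++ _).
by elim: v {IH} => //= b v ->.
Qed.

Section PairWordWindows.
Variables (Gamma X : eqType) (m : nat).

Lemma rep_head_pairs_with (a : X) (v : seq (Gamma + X)) :
  m < size v -> rep_head m (pairs_with (inr a) v).
Proof.
case: v => // b v /= Hm; rewrite /rep_head /= -/(pairs_with _ v) size_pairs_with.
apply/and3P; split=> //; first lia.
apply/allP => t; rewrite mem_iota => /andP [_ Ht].
by rewrite -/(pairs_with (inr a) (b :: v)) nth_pairs_with //=; lia.
Qed.

Lemma windows_pairs_with (a : X) (v : seq (Gamma + X)) :
  size v - m <= windows m (pairs_with (inr a) v).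
Proof.
elim: v => // b v IH; have := @rep_head_pairs_with a (b :: v).
rewrite /= -/(pairs_with _ v); case: (leqP (size v).+1 m) => Hm; first lia.
by move=> /(_ isT) ->; lia.
Qed.

Lemma windows_pairword (u : seq X) (v : seq (Gamma + X)) :
  size u * (size v - m) <= windows m (pairword (map inr u) v).
Proof.
elim: u => //= a u IH; rewrite pairword_cons mulSn.
exact: leq_trans (leq_add (windows_pairs_with a v) IH) (windows_cat_ge _ _ _).
Qed.

End PairWordWindows.

Definition deep {Q : finType} (c : config Q) : bool := size c.2 == 2.
Definition base {Q : finType} (c : config Q) : nat := head 0 c.2.
Definition same_base {Q : finType} (c c' : config Q) : bool :=
  deep c ==> deep c' ==> (base c == base c').

Lemma path_same_base_deep (Q : finType) (c : config Q) r :
  path same_base c r -> all deep (c :: r) -> all (fun d => base d == base c) r.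
Proof.
elim: r c => //= d r IH c /andP [Hcd Hr] /and3P [Dc Dd Dr].
have /eqP Edc : base d == base c by move: Hcd; rewrite /same_base Dc Dd eq_sym.
by rewrite Edc eqxx -Edc IH //= Dd.
Qed.

Section PositionOutput.
Variables (Sigma Gamma Q : finType) (T : pebble_transducer Sigma Gamma Q).

(* Atoms need not have decidable equality; on an input of distinct atoms we print the
   head position instead of the atom under the head. *)
Definition pos_out (c : config Q) : seq (Gamma + nat) :=
  match ptout T c.1 with
  | Some g => [:: inl g]
  | None => if c.2 is p0 :: st then [:: inr (last p0 st)] else [::]
  end.

Definition pos_letter (c : config Q) : Gamma + nat := head (inr 0) (pos_out c).

Lemma size_pos_out c : size (pos_out c) <= 1.
Proof. by rewrite /pos_out; case: (ptout T c.1) => //; case: c.2. Qed.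

Lemma pos_out_deep c : deep c -> pos_out c = [:: pos_letter c].
Proof.
rewrite /pos_letter /pos_out /deep; case: (ptout T c.1) => //.
by case: c.2 => [|? [|? []]].
Qed.

Lemma deep_pos_letter_inr c y :
  deep c -> pos_letter c = inr y -> c = (c.1, [:: base c; y]).
Proof.
case: c => q st; rewrite /pos_letter /pos_out /deep /base /=.
by case: (ptout T q) => //; case: st => [|x [|z []]] //= _ [->].
Qed.

Lemma flatten_pos_out_deep r : all deep r -> flatten (map pos_out r) = map pos_letter r.
Proof. by elim: r => //= c r IH /andP [Dc Dr]; rewrite pos_out_deep // IH. Qed.

Lemma rep_head_deep_run r :
  all deep r -> sorted same_base r -> uniq r -> ~~ rep_head #|Q| (map pos_letter r).
Proof.
case: r => [|c r] // Hdeep Hpath Huniq.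
apply/negP => /rep_headP [Hsize [y Hrep]]; rewrite size_map in Hsize.
set run := c :: r in Hdeep Huniq Hsize Hrep.
have Hbase d : d \in run -> base d = base c.
  by rewrite inE => /predU1P [-> //|/(allP (path_same_base_deep Hpath Hdeep)) /eqP].
have Hin (t : 'I_#|Q|.+1) : 2 * t < size run by have := ltn_ord t; lia.
have Hconf (t : 'I_#|Q|.+1) : nth c run (2 * t) = ((nth c run (2 * t)).1, [:: base c; y]).
  have Hmem := mem_nth c (Hin t); rewrite -(Hbase _ Hmem).
  apply: (deep_pos_letter_inr (allP Hdeep _ Hmem)).
  by have := Hrep t (ltn_ord t); rewrite (nth_map c) ?Hin.
pose state_at (t : 'I_#|Q|.+1) := (nth c run (2 * t)).1.
suff /leq_card : injective state_at by rewrite card_ord ltnn.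
move=> t t'; rewrite /state_at => Est; apply/val_inj/eqP.
rewrite -(eqn_pmul2l (isT : 0 < 2)) -(nth_uniq c (Hin t) (Hin t') Huniq).
by rewrite Hconf [X in _ == X]Hconf Est.
Qed.

Lemma windows_deep_run r :
  all deep r -> sorted same_base r -> uniq r -> windows #|Q| (flatten (map pos_out r)) = 0.
Proof.
move=> Hdeep; rewrite flatten_pos_out_deep //.
elim: r Hdeep => // c r IH Hdeep Hsort Huniq.
move: (rep_head_deep_run Hdeep Hsort Huniq) => /negbTE /= ->.
by rewrite IH ?(path_sorted Hsort) //; [case/andP: Hdeep | case/andP: Huniq].
Qed.

Lemma windows_listing_le s : sorted same_base s -> uniq s ->
  windows #|Q| (flatten (map pos_out s)) <= (4 * #|Q| + 1) * count (predC deep) s.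
Proof.
suff gen : forall r, all deep r -> sorted same_base (r ++ s) -> uniq (r ++ s) ->
    windows #|Q| (flatten (map pos_out (r ++ s))) <= (4 * #|Q| + 1) * count (predC deep) s.
  exact: gen [::] isT.
elim: s => [|c s IH] r Hdeep Hsort Huniq.
  by rewrite cats0 in Hsort Huniq *; rewrite windows_deep_run.
case Dc: (deep c).
  rewrite -cat_rcons in Hsort Huniq *; rewrite /= Dc.
  by apply: IH; rewrite // all_rcons Dc.
have [Sr Scs] := cat_sorted2 Hsort.
move: Huniq; rewrite cat_uniq => /and3P [Ur _ /andP [_ Us]].
rewrite map_cat flatten_cat /= Dc.
apply: leq_trans (windows_insert_le _ _ _ _) _.
rewrite windows_deep_run // add0n mulnDr muln1.
rewrite -addnA [X in _ <= X]addnC leq_add ?(IH [::] isT (path_sorted Scs) Us) //.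
by rewrite addnC leq_add2l size_pos_out.
Qed.

End PositionOutput.

Lemma nth_error_nth (T : Type) (x0 : T) s i :
  i < size s -> List.nth_error s i = Some (nth x0 s i).
Proof. by elim: s i => [|x s IH] [|i] //= /IH. Qed.

Lemma stack_ok_two (x y x' y' : nat) : stack_ok [:: x; y] [:: x'; y'] -> x = x'.
Proof. by rewrite /stack_ok /=; case/orP => [/orP [] /and3P [/eqP -> //] | /eqP [->]]. Qed.

Section Listing.
Variables (Sigma Gamma Q : finType) (A : Type) (T : pebble_transducer Sigma Gamma Q).
Variables (w : seq (Sigma + A)) (s : seq (config Q)).
Hypothesis s_uniq : uniq s.
Hypothesis mem_s : forall c, c \in s <-> is_config T w c.
Hypothesis s_ordered : forall i j ci cj, i < j -> List.nth_error s i = Some ci ->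
  List.nth_error s j = Some cj -> cle T w ci cj.

Lemma cle_nth c0 i j : i < j < size s -> cle T w (nth c0 s i) (nth c0 s j).
Proof.
case/andP => Hij Hj; apply: (s_ordered Hij); apply: nth_error_nth => //.
exact: ltn_trans Hj.
Qed.

Lemma listing_consecutive c0 i : valid_on T w -> i.+1 < size s ->
  consecutive T w (nth c0 s i) (nth c0 s i.+1).
Proof.
move=> [_ [Hanti _]] Hi; have Hi' := ltnW Hi.
have Hs k : k < size s -> is_config T w (nth c0 s k) by move=> Hk; apply/mem_s/mem_nth.
do 2 (split; first exact: Hs); split.
  by move/eqP; rewrite nth_uniq // (ltn_eqF (ltnSn i)).
split; first by apply: cle_nth; rewrite ltnSn.
move=> [d [Hd [Hdc [Hdc' [Hcd Hdc2]]]]].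
have Md : d \in s by apply/mem_s.
have Hk : index d s < size s by rewrite index_mem.
have Ed := nth_index c0 Md.
case: (ltngtP (index d s) i) => [Hlt|Hgt|Heq]; last by apply: Hdc; rewrite -Ed Heq.
  apply: Hdc; apply: Hanti Hd (Hs _ Hi') _ Hcd.
  by rewrite -Ed; apply: cle_nth; rewrite Hlt.
case: (ltngtP (index d s) i.+1) => [|Hgt'|Heq']; first lia.
  apply: Hdc'; apply: Hanti Hd (Hs _ Hi) Hdc2 _.
  by rewrite -Ed; apply: cle_nth; rewrite Hgt'.
by apply: Hdc'; rewrite -Ed Heq'.
Qed.

Lemma sorted_same_base : valid_on T w -> sorted same_base s.
Proof.
move=> Hvalid; case Es: s => [|c0 s'] //; rewrite -Es.
apply/(sortedP c0) => i Hi.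
have [_ [_ [_ [_ Hstack]]]] := Hvalid.
have := Hstack _ _ (listing_consecutive c0 Hvalid Hi).
rewrite /same_base /deep /base.
case: (nth c0 s i) (nth c0 s i.+1) => q st [q' st'] /=.
by case: st => [|x [|y []]] //=; case: st' => [|x' [|y' []]] //= /stack_ok_two ->.
Qed.

Lemma count_shallow_le : num_pebbles_le T 2 ->
  count (predC deep) s <= #|Q| * (size w).+1.
Proof.
move=> Hpeb; rewrite -size_filter.
pose shallow := [seq (q, [::]) | q <- enum Q] ++
  [seq (q, [:: p]) | q <- enum Q, p <- iota 0 (size w)].
have <- : size shallow = #|Q| * (size w).+1.
  by rewrite size_cat size_map size_allpairs -cardE size_iota mulnSr addnC.
apply: uniq_leq_size; first exact: filter_uniq.
move=> [q st]; rewrite mem_filter => /andP [Hshallow /mem_s [Hsize [Hall _]]].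
move: Hshallow Hall (Hpeb q); rewrite -{}Hsize /deep /=.
case: st => [|p [|? []]] //= _; first by rewrite mem_cat map_f ?mem_enum.
rewrite andbT => Hp _; rewrite mem_cat; apply/orP; right.
by apply: (allpairs_f (fun q p => (q, [:: p]))); rewrite ?mem_enum ?mem_iota.
Qed.

End Listing.

Definition relabel (Gamma A : Type) (f : nat -> A) (l : Gamma + nat) : Gamma + A :=
  match l with inl g => inl g | inr p => inr (f p) end.

Lemma relabel_inj (Gamma A : Type) (f : nat -> A) :
  injective f -> injective (@relabel Gamma A f).
Proof. by move=> f_inj [g|p] [g'|p'] //= [] => [->|/f_inj ->]. Qed.

Lemma conf_out_relabel (Sigma Gamma Q : finType) (A : Type) (T : pebble_transducer Sigma Gamma Q)
    (f : nat -> A) n c :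
  let w := map inr (map f (iota 0 n)) : seq (Sigma + A) in
  is_config T w c -> conf_out T w c = map (relabel f) (pos_out T c).
Proof.
move=> w [_ [Hall _]]; rewrite /conf_out /pos_out; case: (ptout T c.1) => //.
move: Hall; case: c.2 => [|p0 st] // Hall.
have Hlast : last p0 st < size w by apply: (allP Hall); apply: mem_last.
rewrite (nth_error_nth (inr (f 0))) // /w (nth_map (f 0)) ?(nth_map 0) ?nth_iota //;
  by move: Hlast; rewrite /w !size_map size_iota.
Qed.

Theorem mainTheorem8 (A : Type) (HA : exists f : nat -> A, injective f)
    (Sigma Gamma Q : finType) (T : pebble_transducer Sigma Gamma Q) :
  valid A T -> num_pebbles_le T 2 -> ~ computes T (@atom_square A).
Proof.
move=> Hvalid Hpeb Hcomp; case: HA => f f_inj.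
set B := #|Q|; set C := (4 * B + 1) * B; set n := C + B.+1; set u := iota 0 n.
have [s [s_uniq [mem_s [s_ordered Hout]]]] := Hcomp (map f u).
have Hpos : flatten (map (pos_out T) s) = map inr (pairword u u).
  have Econf : map (conf_out T (map inr (map f u))) s = map (map (relabel f) \o pos_out T) s.
    by apply/eq_in_map => c /mem_s /conf_out_relabel.
  apply: (inj_map (relabel_inj f_inj)); rewrite map_flatten -map_comp -Econf -Hout.
  by rewrite -map_comp (@eq_map _ _ _ (inr \o f)) // map_comp map_pairword.
have Hlow : n * (n - B) <= windows B (flatten (map (pos_out T) s)).
  rewrite Hpos map_pairword; apply: leq_trans (windows_pairword _ _ _).
  by rewrite size_map size_iota.
have Hup := windows_listing_le T (sorted_same_base s_uniq mem_s s_ordered (Hvalid _)) s_uniq.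
have Hcnt := count_shallow_le s_uniq mem_s Hpeb.
rewrite !size_map size_iota in Hcnt.
have := leq_trans Hlow (leq_trans Hup (leq_mul (leqnn _) Hcnt)).
have -> : n - B = C.+1 by rewrite /n; lia.
rewrite mulnA -/C !mulnS (mulnC C) leq_add2r /n; lia.
Qed.
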